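(* Let $n\geq 3$ and $\alpha_2,\dots,\alpha_n\in\mathbb{C}$ with $\alpha_2=0$ and $\alpha_3\neq0$. Then the transposed Poisson algebra $\mathbf{TP}(\alpha_2,\dots,\alpha_n)$ is isomorphic to $\mathbf{TP}(0,\alpha,0,\dots,0)$ for some $\alpha\in\mathbb{C}$.
   Context: $\mu_0^n$ is the complex commutative associative algebra with basis $\{e_1,\dots,e_n\}$ and $e_i\cdot e_j=e_{i+j}$ for $2\leq i+j\leq n$, other products zero. For $\alpha_2,\dots,\alpha_n\in\mathbb{C}$, $\mathbf{TP}(\alpha_2,\dots,\alpha_n)$ denotes $\mu_0^n$ with its associative product together with the bracket $[e_i,e_j]=(j-i)\sum_{t=i+j-1}^{n}\alpha_{t-i-j+3}e_t$ for $3\leq i+j\leq n+1$, other brackets of basis elements zero. In $\mathbf{TP}(0,\alpha,0,\dots,0)$ the parameter $\alpha$ is in the position of $\alpha_3$. Isomorphisms preserve both operations. *)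

From Stdlib Require Reals.
From mathcomp Require Import Rstruct.
From HB Require Import structures.
From mathcomp Require Import all_boot all_order all_algebra.
From mathcomp Require Import complex.
Set Implicit Arguments. Unset Strict Implicit. Unset Printing Implicit Defensive.
Import Order.TTheory GRing.Theory Num.Theory.
Local Open Scope ring_scope.

Notation CC := (complex Rdefinitions.R).

(* Elements of the n-dimensional algebra are row vectors x : 'rV[CC]_n;
   the coordinate x 0 i (i : 'I_n) is the coefficient of e_(i+1).
   Structure constants are indexed by 1-based naturals i j k in 1..n. *)

Definition mu0_const (n i j k : nat) : CC :=
  if (i + j <= n)%N && (k == i + j)%N then 1 else 0.

(* TP(alpha_2,...,alpha_n): [e_i,e_j] = (j-i) sum_(t=i+j-1)^n alpha_(t-i-j+3) e_t
   for 3 <= i + j <= n + 1; alpha : nat -> CC with alpha k = alpha_k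
   (only the values alpha 2, ..., alpha n are ever used). *)
Definition tp_const (alpha : nat -> CC) (n i j k : nat) : CC :=
  if [&& (3 <= i + j)%N, (i + j <= n.+1)%N, ((i + j).-1 <= k)%N & (k <= n)%N]
  then (j%:R - i%:R) * alpha (k + 3 - (i + j))%N
  else 0.

Definition bilin (n : nat) (c : nat -> nat -> nat -> CC) (x y : 'rV[CC]_n)
  : 'rV[CC]_n :=
  \row_(k < n) \sum_(i < n) \sum_(j < n) x 0 i * y 0 j * c i.+1 j.+1 k.+1.

Definition tp_mul (n : nat) : 'rV[CC]_n -> 'rV[CC]_n -> 'rV[CC]_n :=
  bilin (mu0_const n).

Definition tp_bracket (n : nat) (alpha : nat -> CC)
  : 'rV[CC]_n -> 'rV[CC]_n -> 'rV[CC]_n :=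
  bilin (tp_const alpha n).

Definition TP_isomorphic (n : nat) (alpha beta : nat -> CC) : Prop :=
  exists P : 'M[CC]_n, P \in unitmx /\
    (forall x y : 'rV[CC]_n,
        tp_mul (x *m P) (y *m P) = tp_mul x y *m P) /\
    (forall x y : 'rV[CC]_n,
        tp_bracket beta (x *m P) (y *m P) = tp_bracket alpha x y *m P).

Definition alpha3_only (a : CC) : nat -> CC := fun k => if k == 3%N then a else 0.

From Stdlib Require Reals.
From mathcomp Require Import Rstruct.
From HB Require Import structures.
From mathcomp Require Import all_boot all_order all_algebra.
From mathcomp Require Import complex ring zify.
Set Implicit Arguments. Unset Strict Implicit. Unset Printing Implicit Defensive.
Import Order.TTheory GRing.Theory Num.Theory.
Local Open Scope ring_scope.

(* Identify e_i with 'X^i, so that mu_0^n becomes X C[X] / (X^(n+1)): the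
   product is truncated multiplication and the bracket of TP(alpha) is
   [f, g] = W (f g' - f' g) with W = sum_s alpha_(s+2) X^s. A substitution
   X |-> phi with phi(0) = 0, phi'(0) = 1 is an automorphism of the truncated
   product, and by the chain rule it carries the bracket of weight W to the
   bracket of weight a X as soon as a X phi' = W(phi) modulo X^(n+1), i.e. phi
   conjugates the vector field W d/dX to its linear part a X d/dX, a = alpha_3.
   Since W(0) = alpha_2 = 0 and W'(0) = alpha_3 <> 0, this linearisation
   equation is solved one coefficient at a time: the coefficient c of X^(m+2)
   in phi enters the X^(m+2)-coefficient of the defect only through
   alpha_3 (m+1) c. *)

Section Truncation.

Variable R : comNzRingType.
Implicit Types (p q f g phi : {poly R}) (m : nat).

Lemma take_poly_take m k p :
  (m <= k)%N -> take_poly m (take_poly k p) = take_poly m p.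
Proof.
move=> le_mk; apply/polyP => i; rewrite !coef_take_poly.
by case: ltnP => // lt_im; rewrite (leq_trans lt_im le_mk).
Qed.

Lemma take_poly_idem m p : take_poly m (take_poly m p) = take_poly m p.
Proof. exact: take_poly_take. Qed.

Lemma take_poly_mull m p q :
  take_poly m (take_poly m p * q) = take_poly m (p * q).
Proof.
rewrite -[in RHS](poly_take_drop m p) mulrDl take_polyD mulrAC.
by rewrite take_polyMXn_0 addr0.
Qed.

Lemma take_polyM_eq m p p' q q' :
  take_poly m p = take_poly m p' -> take_poly m q = take_poly m q' ->
  take_poly m (p * q) = take_poly m (p' * q').
Proof.
move=> ep eq; rewrite -take_poly_mull ep take_poly_mull.
by rewrite ![p' * _]mulrC -take_poly_mull eq take_poly_mull.
Qed.

Lemma drop_poly1_mulX p : p`_0 = 0 -> drop_poly 1 p * 'X = p.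
Proof.
by move=> p0; apply/polyP => -[|i]; rewrite coefMX ?coef_drop_poly ?addn1.
Qed.

Lemma coef0_comp_poly p q : q`_0 = 0 -> (p \Po q)`_0 = p`_0.
Proof.
by move=> q0; rewrite -!horner_coef0 horner_comp [q.[0]]horner_coef0 q0.
Qed.

Lemma take_poly_comp m p phi : phi`_0 = 0 ->
  take_poly m (take_poly m p \Po phi) = take_poly m (p \Po phi).
Proof.
move=> /drop_poly1_mulX phiE.
rewrite -[in RHS](poly_take_drop m p) comp_polyD take_polyD.
by rewrite comp_polyM comp_Xn_poly -phiE exprMn mulrA take_polyMXn_0 addr0.
Qed.

Lemma coef_mulX_deriv p i : ('X * p^`())`_i = p`_i *+ i.
Proof. by rewrite coefXM; case: i => [|i] //=; rewrite coef_deriv. Qed.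

Lemma take_poly_mulX_deriv m p :
  take_poly m ('X * (take_poly m p)^`()) = take_poly m ('X * p^`()).
Proof.
apply/polyP => i; rewrite !coef_take_poly !coef_mulX_deriv coef_take_poly.
by case: ltnP.
Qed.

Lemma comp_poly_taylor1 p q h :
  exists t, p \Po (q + h) = p \Po q + (p^`() \Po q) * h + t * h ^+ 2.
Proof.
elim/poly_ind: p => [|p c [t IH]].
  by exists 0; rewrite deriv0 !comp_poly0 !mul0r !addr0.
exists (t * (q + h) + (p^`() \Po q)).
rewrite derivMXaddC !comp_poly_MXaddC comp_polyD comp_polyM comp_polyX IH; ring.
Qed.

Definition wronskian f g := f * g^`() - f^`() * g.

Lemma wronskian_comp f g phi :
  wronskian (f \Po phi) (g \Po phi) = phi^`() * (wronskian f g \Po phi).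
Proof. by rewrite /wronskian !deriv_comp comp_polyB !comp_polyM; ring. Qed.

Lemma wronskian_Xn a b :
  wronskian 'X^(a.+1) 'X^(b.+1) = (b%:R - a%:R) *: 'X^((a + b).+1) :> {poly R}.
Proof.
rewrite /wronskian !derivXn /= mulrnAr mulrnAl -!exprD addSn addnS.
by rewrite scalerBl !scaler_nat !mulrS opprD addrACA subrr add0r.
Qed.

Lemma take_poly_mulX_wronskian m f g :
  take_poly m ('X * wronskian (take_poly m f) (take_poly m g)) =
  take_poly m ('X * wronskian f g).
Proof.
have wrE f' g' : 'X * wronskian f' g' = f' * ('X * g'^`()) - ('X * f'^`()) * g'.
  by rewrite /wronskian; ring.
rewrite !wrE !linearB /=; congr (_ - _); apply: take_polyM_eq;
  by rewrite ?take_poly_idem ?take_poly_mulX_deriv.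
Qed.

End Truncation.

Section FormalLinearization.

Variable F : fieldType.
Hypothesis charF0 : [pchar F] =i pred0.
Variable W : {poly F}.
Hypotheses (W0 : W`_0 = 0) (W1 : W`_1 != 0).

Implicit Types phi : {poly F}.

Let defect phi := (W`_1)%:P * 'X * phi^`() - (W \Po phi).

Lemma linearization_step m phi : phi`_0 = 0 -> take_poly m.+2 (defect phi) = 0 ->
  exists c, take_poly m.+3 (defect (phi + c *: 'X^(m.+2))) = 0.
Proof.
move=> phi0 lin; set l := W`_1; set e := (defect phi)`_m.+2.
exists (- e / (l * m.+1%:R)); set c := - e / _; set h := c *: 'X^(m.+2).
have [t taylor] := comp_poly_taylor1 W phi h.
have defectE : defect (phi + h) =
    defect phi + l%:P * ('X * h^`()) - (W^`() \Po phi) * h - t * h ^+ 2.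
  by rewrite /defect derivD taylor; ring.
have coef_defect i : (i < m.+2)%N -> (defect phi)`_i = 0.
  move=> lt_i; have := congr1 (fun p : {poly F} => p`_i) lin.
  by rewrite coef_take_poly lt_i coef0.
have coef_h i : h`_i = c * (i == m.+2)%:R by rewrite coefZ coefXn.
have Wphi0 : (W^`() \Po phi)`_0 = l by rewrite coef0_comp_poly // coef_deriv.
have coef_Wh i : ((W^`() \Po phi) * h)`_i =
    if (i < m.+2)%N then 0 else c * (W^`() \Po phi)`_(i - m.+2).
  by rewrite -scalerAr coefZ coefMXn; case: ifP; rewrite ?mulr0.
have coef_th i : (i < m.+3)%N -> (t * h ^+ 2)`_i = 0.
  move=> lt_i; rewrite exprZn -exprM -scalerAr coefZ coefMXn.
  by rewrite ifT ?mulr0 //; lia.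
apply/polyP => i; rewrite coef_take_poly coef0.
case: (ltnP i m.+3) => [lt_i|//].
rewrite defectE coefB coefB coefD coefCM coef_mulX_deriv coef_h coef_Wh.
rewrite coef_th //.
case: (ltnP i m.+2) => [lt_i2|ge_i2].
  by rewrite coef_defect // (ltn_eqF lt_i2) mulr0 mul0rn mulr0 !subr0 addr0.
have -> : i = m.+2 by lia.
rewrite eqxx subnn Wphi0 mulr1 -mulr_natr subr0 -/e /c; field.
by rewrite -mulrS ((pcharf0P F).1 charF0) W1.
Qed.

Lemma formal_linearization m : exists phi, [/\ phi`_0 = 0, phi`_1 = 1 &
  take_poly m ((W`_1)%:P * 'X * phi^`()) = take_poly m (W \Po phi)].
Proof.
suff [phi [phi0 phi1 lin]] :
    exists phi, [/\ phi`_0 = 0, phi`_1 = 1 & take_poly m.+2 (defect phi) = 0].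
  exists phi; split => //; apply/eqP; rewrite -subr_eq0 -linearB /=.
  by rewrite -(take_poly_take _ (leqW (leqnSn m))) lin take_poly0r.
elim: m => [|m [phi [phi0 phi1 lin]]].
  exists 'X; split; rewrite ?coefX //.
  apply/polyP => -[|[|i]]; rewrite coef_take_poly coef0 //= /defect.
  - by rewrite derivX mulr1 comp_polyXr coefB coefCM coefX W0 mulr0 subr0.
  - by rewrite derivX mulr1 comp_polyXr coefB coefCM coefX mulr1 subrr.
have [c lin'] := linearization_step phi0 lin.
exists (phi + c *: 'X^(m.+2)).
by split; rewrite // coefD coefZ coefXn mulr0 addr0.
Qed.

End FormalLinearization.

Section RowPolynomials.

Variables (R : comNzRingType) (n : nat).
Implicit Types (x : 'rV[R]_n) (p phi : {poly R}).

Definition poly_of_row x : {poly R} := \sum_(i < n) x 0 i *: 'X^(i.+1).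

Lemma coef_poly_of_row x (i : 'I_n) : (poly_of_row x)`_i.+1 = x 0 i.
Proof.
rewrite coef_sum (bigD1 i) //= coefZ coefXn eqxx mulr1 big1 ?addr0 // => j ji.
rewrite coefZ coefXn eqSS; case: eqP => [/val_inj ij|]; last by rewrite mulr0.
by rewrite ij eqxx in ji.
Qed.

Lemma coef_poly_of_row_out x k :
  (k == 0)%N || (n < k)%N -> (poly_of_row x)`_k = 0.
Proof.
move=> k_out; rewrite coef_sum big1 // => i _; rewrite coefZ coefXn.
have /negbTE-> : k != i.+1.
  case/orP: k_out => [/eqP->//|]; apply: contraTneq => ->.
  by rewrite -leqNgt ltn_ord.
by rewrite mulr0.
Qed.

Lemma poly_of_row_inj : injective poly_of_row.
Proof.
move=> x y exy; apply/rowP => i.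
by rewrite -[x 0 i]coef_poly_of_row -[y 0 i]coef_poly_of_row exy.
Qed.

Lemma poly_of_row_coefs p : p`_0 = 0 ->
  poly_of_row (\row_(k < n) p`_k.+1) = take_poly n.+1 p.
Proof.
move=> p0; apply/polyP => -[|k]; rewrite coef_take_poly.
  by rewrite coef_poly_of_row_out // p0 if_same.
have [lt_kn|le_nk] := ltnP k n.
  by rewrite (coef_poly_of_row _ (Ordinal lt_kn)) mxE ltnS lt_kn.
by rewrite ltnS ltnNge le_nk coef_poly_of_row_out // ltnS le_nk orbT.
Qed.

Definition subst_mx phi : 'M[R]_n := \matrix_(i, k) (phi ^+ i.+1)`_k.+1.

Lemma poly_of_row_subst x phi : phi`_0 = 0 ->
  poly_of_row (x *m subst_mx phi) = take_poly n.+1 (poly_of_row x \Po phi).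
Proof.
move=> phi0; rewrite -poly_of_row_coefs; last first.
  by rewrite coef0_comp_poly // coef_poly_of_row_out.
congr poly_of_row; apply/rowP => k; rewrite !mxE /poly_of_row linear_sum coef_sum.
by apply: eq_bigr => i _; rewrite mxE linearZ /= comp_Xn_poly coefZ.
Qed.

End RowPolynomials.

Lemma subst_mx_unit (R : comUnitRingType) n (phi : {poly R}) :
  phi`_0 = 0 -> phi`_1 \is a GRing.unit -> subst_mx n phi \in unitmx.
Proof.
move=> /drop_poly1_mulX phiE phi1; set psi := drop_poly 1 phi in phiE.
have coef_pow i k : (phi ^+ i)`_k = if (k < i)%N then 0 else (psi ^+ i)`_(k - i).
  by rewrite -phiE exprMn coefMXn.
rewrite unitmxE -det_tr det_trig; last first.
  by apply/is_trig_mxP => i j lt_ij; rewrite !mxE coef_pow ltnS lt_ij.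
apply: unitr_prod => i _; rewrite !mxE coef_pow ltnn subnn.
by rewrite -horner_coef0 horner_exp horner_coef0 coef_drop_poly unitrX.
Qed.

Lemma poly_of_row_bilin n (c : nat -> nat -> nat -> CC)
    (Q : nat -> nat -> {poly CC}) (x y : 'rV[CC]_n) :
  (forall i j, (Q i j)`_0 = 0) ->
  (forall i j k, (k < n)%N -> c i.+1 j.+1 k.+1 = (Q i j)`_k.+1) ->
  poly_of_row (bilin c x y) =
  take_poly n.+1 (\sum_(i < n) \sum_(j < n) (x 0 i * y 0 j) *: Q i j).
Proof.
move=> Q0 cQ; rewrite -poly_of_row_coefs; last first.
  rewrite coef_sum big1 // => i _; rewrite coef_sum big1 // => j _.
  by rewrite coefZ Q0 mulr0.
congr poly_of_row; apply/rowP => k; rewrite !mxE coef_sum; apply: eq_bigr => i _.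
by rewrite coef_sum; apply: eq_bigr => j _; rewrite coefZ cQ.
Qed.

Lemma tp_mul_poly n (x y : 'rV[CC]_n) :
  poly_of_row (tp_mul x y) = take_poly n.+1 (poly_of_row x * poly_of_row y).
Proof.
rewrite (@poly_of_row_bilin _ _ (fun i j => 'X^(i.+1 + j.+1))).
- congr take_poly; rewrite /poly_of_row mulr_suml; apply: eq_bigr => i _.
  rewrite mulr_sumr; apply: eq_bigr => j _.
  by rewrite -scalerAl -scalerAr scalerA exprD.
- by move=> i j; rewrite coefXn addnS.
- move=> i j k lt_kn; rewrite /mu0_const coefXn.
  by case: eqP => [<-|_]; rewrite ?andbF // andbT lt_kn.
Qed.

Definition tp_weight n (alpha : nat -> CC) : {poly CC} :=
  \poly_(s < n) alpha s.+2.

Lemma tp_bracket_poly n alpha (x y : 'rV[CC]_n) :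
  poly_of_row (tp_bracket alpha x y) =
  take_poly n.+1 (tp_weight n alpha * wronskian (poly_of_row x) (poly_of_row y)).
Proof.
rewrite (@poly_of_row_bilin _ _
  (fun i j => tp_weight n alpha * wronskian 'X^(i.+1) 'X^(j.+1))).
- congr take_poly; rewrite /wronskian /poly_of_row !raddf_sum /=.
  rewrite !mulr_suml -sumrB mulr_sumr; apply: eq_bigr => i _.
  rewrite !mulr_sumr -sumrB mulr_sumr; apply: eq_bigr => j _.
  by rewrite !derivZ -!scalerAl -!scalerAr !scalerA -scalerBr -scalerAr.
- by move=> i j; rewrite wronskian_Xn -scalerAr coefZ coefMXn mulr0.
move=> i j k lt_kn.
rewrite wronskian_Xn -scalerAr coefZ coefMXn coef_poly /tp_const.
have -> : j.+1%:R - i.+1%:R = j%:R - i%:R :> CC.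
  by rewrite !mulrS opprD addrACA subrr add0r.
have [/eqP|ij_gt0] := posnP (i + j).
  by rewrite addn_eq0 => /andP[/eqP-> /eqP->]; rewrite subrr !mul0r.
have [lt_k|le_k] := ltnP k (i + j).
  have -> : ((i.+1 + j.+1).-1 <= k.+1)%N = false by lia.
  by rewrite !(andbF, andFb) /= ltnS lt_k mulr0.
have -> : [&& (2 < i.+1 + j.+1)%N, (i.+1 + j.+1 <= n.+1)%N,
    ((i.+1 + j.+1).-1 <= k.+1)%N & (k < n)%N] by apply/and4P; split; lia.
have -> : (k.+1 < (i + j).+1)%N = false by lia.
have -> : (k.+1 - (i + j).+1 < n)%N by lia.
by have -> : (k.+1 + 3 - (i.+1 + j.+1) = (k.+1 - (i + j).+1).+2)%N by lia.
Qed.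

Lemma tp_weight_alpha3_only n a :
  (2 <= n)%N -> tp_weight n (alpha3_only a) = a%:P * 'X.
Proof.
move=> n_ge2; apply/polyP => -[|[|i]].
all: rewrite coef_poly coefCM coefX /alpha3_only /=.
- by rewrite mulr0 if_same.
- by rewrite n_ge2 mulr1.
- by rewrite mulr0 if_same.
Qed.

Theorem mainTheorem8 (n : nat) (alpha : nat -> CC) :
  (3 <= n)%N -> alpha 2%N = 0 -> alpha 3%N != 0 ->
  exists a : CC, TP_isomorphic n alpha (alpha3_only a).
Proof.
move=> n_ge3 alpha2 alpha3.
set W := tp_weight n alpha.
have W0 : W`_0 = 0 by rewrite coef_poly; case: ifP.
have W1 : W`_1 = alpha 3%N by rewrite coef_poly ifT //; lia.
have W1_neq0 : W`_1 != 0 by rewrite W1.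
have [phi [phi0 phi1 lin]] :=
  formal_linearization (@pchar_num CC) W0 W1_neq0 n.+1.
rewrite W1 in lin.
exists (alpha 3%N), (subst_mx n phi); split.
  by apply: subst_mx_unit; rewrite ?phi1 ?unitr1.
split=> x y; apply: poly_of_row_inj.
  rewrite tp_mul_poly !poly_of_row_subst // tp_mul_poly.
  rewrite take_poly_comp // comp_polyM.
  by apply: take_polyM_eq; rewrite take_poly_idem.
rewrite tp_bracket_poly !poly_of_row_subst // tp_bracket_poly take_poly_comp //.
rewrite tp_weight_alpha3_only; last by lia.
set px := poly_of_row x; set py := poly_of_row y.
transitivity (take_poly n.+1
    ((alpha 3%N)%:P * 'X * wronskian (px \Po phi) (py \Po phi))).
  rewrite -!mulrA; apply: take_polyM_eq => //.
  exact: take_poly_mulX_wronskian.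
by rewrite wronskian_comp comp_polyM !mulrA; apply: take_polyM_eq.
Qed.
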